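(* Let $p,q\in\mathbb{G}^n$ with $\|p-q\|\ge2$. Then $\lceil(p+q)/2\rceil\notin\{p,q\}$ and $\lfloor(p+q)/2\rfloor\notin\{p,q\}$. Moreover, $\|p-\lceil(p+q)/2\rceil\|<\|p-q\|$ and $\|p-\lfloor(p+q)/2\rfloor\|<\|p-q\|$.
   Context: Fix an integer $k\ge1$. The infinite $k$-star $\mathbb{T}$ is $\mathbb{R}_+\times\{1,\dots,k\}$ with all points $(0,s)$ identified to a point $0$; $(x,s)$ is also written $x$; $\mathrm{dist}((x,s),(x',s'))=|x-x'|$ if $s=s'$ and $x+x'$ otherwise. The midpoint $(x+x')/2$ is the unique $u\in\mathbb{T}$ with $\mathrm{dist}(x,u)=\mathrm{dist}(u,x')=\mathrm{dist}(x,x')/2$. $x$ is integral if $\mathrm{dist}(x,0)\in\mathbb{Z}$, proper half-integral if $2\mathrm{dist}(x,0)\in\mathbb{Z}$ but $\mathrm{dist}(x,0)\notin\mathbb{Z}$. $\mathbb{G}\subseteq\mathbb{T}\times\mathbb{R}$ is the set of $(x,y)$ with $x,y$ both integral or both proper half-integral; $(x,y)\in\mathbb{G}$ is integral if both are integral, and then even if $\mathrm{dist}(x,0)-y$ is even, odd otherwise. For $p=(x,y),q=(x',y')\in\mathbb{T}\times\mathbb{R}$, $\|p-q\|=\mathrm{dist}(x,x')+|y-y'|$ and $(p+q)/2=((x+x')/2,(y+y')/2)$. $p,q\in\mathbb{G}$ are adjacent if $\|p-q\|=1$ and exactly one is integral; then $p\prec q$ if $p$ is even or $q$ is odd, and $\preceq$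 is the reflexive transitive closure. For $p,q\in\mathbb{G}$ there is a unique pair $u\preceq v$ in $\mathbb{G}$ with $(u+v)/2=(p+q)/2$; set $\lfloor(p+q)/2\rfloor=u$, $\lceil(p+q)/2\rceil=v$. On $\mathbb{G}^n$ these operations are taken componentwise, and $\|p-q\|:=\max_{1\le i\le n}\|p_i-q_i\|$. *)

From HB Require Import structures.
From mathcomp Require Import all_boot all_order all_algebra.
From mathcomp Require Import reals.
From Stdlib Require Import ClassicalEpsilon Relations.
Set Implicit Arguments. Unset Strict Implicit. Unset Printing Implicit Defensive.
Import Order.TTheory GRing.Theory Num.Theory.
Local Open Scope ring_scope.

Section Star.
Variables (R : realType) (k : nat).

(* The infinite k-star: pairs (x, s), x >= 0, s a ray index in 'I_k; all
   points (0, s) are identified with the canonical representative (0, ord 0). *)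
Definition tstar_ok (xs : R * 'I_k) : bool :=
  (0 <= xs.1) && ((xs.1 == 0) ==> (nat_of_ord xs.2 == 0%N)).
Definition Tstar := {xs : R * 'I_k | tstar_ok xs}.

Definition tpos (x : Tstar) : R := (sval x).1.
Definition tray (x : Tstar) : 'I_k := (sval x).2.

Definition tdist (x x' : Tstar) : R :=
  if tray x == tray x' then `|tpos x - tpos x'| else tpos x + tpos x'.

Definition is_tmid (x x' u : Tstar) : Prop :=
  tdist x u = tdist x x' / 2 /\ tdist u x' = tdist x x' / 2.
Definition tmid (x x' : Tstar) : Tstar := epsilon (inhabits x) (is_tmid x x').

Definition integral_t (x : Tstar) : Prop := tpos x \is a Num.int.
Definition phalf_t (x : Tstar) : Prop :=
  (2 * tpos x \is a Num.int) /\ ~ (tpos x \is a Num.int).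
Definition integral_r (y : R) : Prop := y \is a Num.int.
Definition phalf_r (y : R) : Prop := (2 * y \is a Num.int) /\ ~ (y \is a Num.int).

Definition Gpt := (Tstar * R)%type.

Definition inG (p : Gpt) : Prop :=
  (integral_t p.1 /\ integral_r p.2) \/ (phalf_t p.1 /\ phalf_r p.2).
Definition gintegral (p : Gpt) : Prop := integral_t p.1 /\ integral_r p.2.
Definition geven (p : Gpt) : Prop :=
  gintegral p /\ exists m : int, tpos p.1 - p.2 = 2 * m%:~R.
Definition godd (p : Gpt) : Prop := gintegral p /\ ~ geven p.

Definition gnorm (p q : Gpt) : R := tdist p.1 q.1 + `|p.2 - q.2|.
Definition gmid (p q : Gpt) : Gpt := (tmid p.1 q.1, (p.2 + q.2) / 2).

Definition gadj (p q : Gpt) : Prop :=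
  inG p /\ inG q /\ gnorm p q = 1 /\
  ((gintegral p /\ ~ gintegral q) \/ (~ gintegral p /\ gintegral q)).
Definition gprec (p q : Gpt) : Prop := gadj p q /\ (geven p \/ godd q).
Definition gle : Gpt -> Gpt -> Prop := clos_refl_trans Gpt gprec.

Definition gpair_spec (p q : Gpt) (uv : Gpt * Gpt) : Prop :=
  inG uv.1 /\ inG uv.2 /\ gle uv.1 uv.2 /\ gmid uv.1 uv.2 = gmid p q.
Definition gpair (p q : Gpt) : Gpt * Gpt :=
  epsilon (inhabits (p, q)) (gpair_spec p q).
Definition gfloor (p q : Gpt) : Gpt := (gpair p q).1.
Definition gceil (p q : Gpt) : Gpt := (gpair p q).2.

Definition gfloorv n (p q : 'I_n -> Gpt) : 'I_n -> Gpt := fun i => gfloor (p i) (q i).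
Definition gceilv n (p q : 'I_n -> Gpt) : 'I_n -> Gpt := fun i => gceil (p i) (q i).
Definition gnormv n (p q : 'I_n -> Gpt) : R :=
  \big[Num.max/0]_(i < n) gnorm (p i) (q i).

End Star.

From HB Require Import structures.
From mathcomp Require Import all_boot all_order all_algebra.
From mathcomp Require Import reals.
From mathcomp Require Import ring lra zify.
From Stdlib Require Import ClassicalEpsilon Relations Classical.
Set Implicit Arguments. Unset Strict Implicit. Unset Printing Implicit Defensive.
Import Order.TTheory GRing.Theory Num.Theory.
Local Open Scope ring_scope.

(* Along a ray of the star, give a point (t, y) the coordinates a = t - y and b = t + y.
   The points of G on the ray are exactly those with integral a and b; the integral ones
   have a + b even, the even ones have a and b even, the odd ones a and b odd.  A chain of
   the covering relation has at most two steps, and a two-step chain runs from an even to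
   an odd point, which are at odd distance; hence u <= v forces ||u - v|| < 2.  The
   midpoint of two points of G has half-integral coordinates (a, b), and it is the
   midpoint of two comparable points of G among its lattice neighbours.  So the floor and
   the ceiling of (p + q)/2 lie within distance 1 of (p + q)/2, hence within
   ||p - q||/2 +- 1 of p and of q, and all claims follow once ||p - q|| >= 2. *)

Ltac case_norms :=
  repeat match goal with |- context[`|?z|] => case: (ger0P z) => ? end.

Ltac case_rays :=
  repeat (first [ progress rewrite eqxx /=
    | match goal with |- context[?a == ?b] =>
        lazymatch type of a with ordinal _ => case: (a =P b) => [?|?]; try subst end end]).

Ltac star_arith := case_rays; case_norms; intros; try (exfalso; congruence); lra.

Section StarMetric.
Variables (R : realType) (k : nat).
Implicit Types (x y u : Tstar R k) (r : 'I_k) (s t : R).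

Definition ray0 r : 'I_k := Ordinal (leq_ltn_trans (leq0n r) (ltn_ord r)).

Lemma tpoint_subproof r t : tstar_ok (if 0 < t then (t, r) else (0, ray0 r)).
Proof.
by rewrite /tstar_ok; case: ifP => [t_gt0|_] /=; rewrite ?lexx ?eqxx // ltW //= gt_eqF.
Qed.

(* [t <= 0] gives the centre. *)
Definition tpoint r t : Tstar R k := exist (fun xs => tstar_ok xs) _ (tpoint_subproof r t).

Lemma tpos_ge0 x : 0 <= tpos x.
Proof. by case: x => -[t r] ok; case/andP: (ok). Qed.

Lemma tpos_tpoint r t : 0 <= t -> tpos (tpoint r t) = t.
Proof.
by rewrite /tpos /=; case: ltrP => //= t_le0 t_ge0; apply/eqP; rewrite eq_le t_ge0 t_le0.
Qed.

Lemma tpointK x : tpoint (tray x) (tpos x) = x.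
Proof.
case: x => -[t r] ok; apply: val_inj; rewrite /tpoint /tpos /tray /=.
case: ltrP => // t_le0; move: ok; rewrite /tstar_ok /= => /andP[t_ge0 /implyP ray_r].
have t0 : t = 0 by apply/eqP; rewrite eq_le t_le0 t_ge0.
by rewrite t0 in ray_r *; congr pair; apply/val_inj/esym/eqP/ray_r.
Qed.

Lemma tpoint_ind (P : Tstar R k -> Prop) :
  (forall r t, 0 <= t -> P (tpoint r t)) -> forall x, P x.
Proof. by move=> Ptpoint x; rewrite -(tpointK x); apply/Ptpoint/tpos_ge0. Qed.

Lemma tpoint_eq r r' s t : s = t -> r = r' \/ s <= 0 -> tpoint r s = tpoint r' t.
Proof.
move=> <- [<-|s_le0] //; apply: val_inj; rewrite /= ltNge s_le0 /=.
by congr pair; apply: val_inj.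
Qed.

Lemma tdist_tpoint r r' s t : 0 <= s -> 0 <= t ->
  tdist (tpoint r s) (tpoint r' t) = if r == r' then `|s - t| else s + t.
Proof.
move=> s_ge0 t_ge0; rewrite /tdist !tpos_tpoint // /tray /=.
by do 2 case: ltrP => ? /=; repeat case: ifP => ?; case_norms; lra.
Qed.

Lemma tdistC x y : tdist x y = tdist y x.
Proof.
elim/tpoint_ind: x => r s ?; elim/tpoint_ind: y => r' t ?.
by rewrite !tdist_tpoint //; star_arith.
Qed.

Lemma tdist_triangle x y u : tdist x u <= tdist x y + tdist y u.
Proof.
elim/tpoint_ind: x => r1 s1 ?; elim/tpoint_ind: y => r2 s2 ?; elim/tpoint_ind: u => r3 s3 ?.
by rewrite !tdist_tpoint //; star_arith.
Qed.

Lemma tdistxx x : tdist x x = 0.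
Proof. by rewrite /tdist eqxx subrr normr0. Qed.

Definition star_mid r s r' t : Tstar R k :=
  if r == r' then tpoint r ((s + t) / 2)
  else if t <= s then tpoint r ((s - t) / 2) else tpoint r' ((t - s) / 2).

Lemma is_tmid_star_mid r r' s t : 0 <= s -> 0 <= t ->
  is_tmid (tpoint r s) (tpoint r' t) (star_mid r s r' t).
Proof.
rewrite /is_tmid /star_mid => s_ge0 t_ge0.
case: (r =P r') => [<-|r_neq]; last case: lerP => st;
  by rewrite !tdist_tpoint //; try lra; split; star_arith.
Qed.

Lemma star_mid_unique r r' s t u : 0 <= s -> 0 <= t ->
  is_tmid (tpoint r s) (tpoint r' t) u -> u = star_mid r s r' t.
Proof.
move=> s_ge0 t_ge0; elim/tpoint_ind: u => ru su ?.
rewrite /is_tmid /star_mid !tdist_tpoint //.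
case: (r =P r') => [<-|r_neq]; last case: lerP => st;
  case_rays; case_norms; move=> [? ?]; try (exfalso; congruence);
  apply: tpoint_eq; try lra; by [left | right; lra].
Qed.

Lemma is_tmid_tmid x y : is_tmid x y (tmid x y).
Proof.
rewrite /tmid; apply: epsilon_spec.
elim/tpoint_ind: x => r s ?; elim/tpoint_ind: y => r' t ?.
by exists (star_mid r s r' t); apply: is_tmid_star_mid.
Qed.

Lemma tmid_tpointE r r' s t : 0 <= s -> 0 <= t ->
  tmid (tpoint r s) (tpoint r' t) = star_mid r s r' t.
Proof. by move=> s_ge0 t_ge0; apply: star_mid_unique (is_tmid_tmid _ _). Qed.

Lemma tmid_unique x y u : is_tmid x y u -> tmid x y = u.
Proof.
elim/tpoint_ind: x => r s ?; elim/tpoint_ind: y => r' t ? mid_u.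
by rewrite tmid_tpointE // (star_mid_unique _ _ mid_u).
Qed.

Lemma tmidC x y : tmid y x = tmid x y.
Proof.
have [dist_xm dist_my] := is_tmid_tmid x y.
by apply: tmid_unique; split; rewrite tdistC (tdistC y x).
Qed.

Lemma tmid_tpoint r s t : 0 <= s -> 0 <= t ->
  tmid (tpoint r s) (tpoint r t) = tpoint r ((s + t) / 2).
Proof. by move=> s_ge0 t_ge0; rewrite tmid_tpointE // /star_mid eqxx. Qed.

End StarMetric.

Lemma intr_half_int (R : archiNumFieldType) (z : int) :
  ((z%:~R / 2 : R) \is a Num.int) = (2 %| z)%Z.
Proof.
apply/idP/idP => [/intrP[w e]|/dvdzP[w ->]].
  have -> : z = w * 2 by apply: (@intr_inj R); rewrite intrM -e; field.
  exact: dvdz_mull.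
by rewrite (_ : _ / 2 = w%:~R) ?intr_int // intrM; field.
Qed.

Lemma intr_half_ge0 (R : numFieldType) (z : int) : 0 <= z -> 0 <= (z%:~R / 2 : R).
Proof. by move=> z_ge0; rewrite divr_ge0 ?ler0z. Qed.

Section Grid.
Variables (R : realType) (k : nat).
Implicit Types (p q u v w : Gpt R k) (r : 'I_k) (a b : int).

Lemma gnormC p q : gnorm p q = gnorm q p.
Proof. by rewrite /gnorm tdistC distrC. Qed.

Lemma gnorm_triangle p q w : gnorm p w <= gnorm p q + gnorm q w.
Proof.
rewrite /gnorm; have := tdist_triangle p.1 q.1 w.1; have := ler_distD q.2 p.2 w.2.
lra.
Qed.

Lemma gnormxx p : gnorm p p = 0.
Proof. by rewrite /gnorm tdistxx subrr normr0 addr0. Qed.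

Lemma gnorm_ge0 p q : 0 <= gnorm p q.
Proof. by rewrite /gnorm addr_ge0 // /tdist; case: ifP; rewrite ?addr_ge0 ?tpos_ge0. Qed.

Lemma gnorm_gmid p q :
  gnorm p (gmid p q) = gnorm p q / 2 /\ gnorm (gmid p q) q = gnorm p q / 2.
Proof.
rewrite /gnorm /=; have [-> ->] := is_tmid_tmid p.1 q.1.
by split; case_norms; lra.
Qed.

Lemma gmidC p q : gmid q p = gmid p q.
Proof. by rewrite /gmid tmidC addrC. Qed.

Definition grid_pt r a b : Gpt R k := (tpoint r ((a + b)%:~R / 2), (b - a)%:~R / 2).

Definition halfgrid_pt r (A B : int) : Gpt R k :=
  (tpoint r ((A + B)%:~R / 4), (B - A)%:~R / 4).

Lemma grid_pt_inG r a b : 0 <= a + b -> inG (grid_pt r a b).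
Proof.
move=> ab_ge0; rewrite /inG /gintegral /integral_t /integral_r /phalf_t /phalf_r /=.
rewrite tpos_tpoint ?intr_half_ge0 // !(mulrC 2) !divfK ?pnatr_eq0 // !intr_int !intr_half_int.
by case: (boolP (2 %| a + b)%Z) => ab_even; [left | right]; lia.
Qed.

Lemma inG_grid_pt p : inG p -> exists r a b, 0 <= a + b /\ p = grid_pt r a b.
Proof.
case: p => x y; rewrite /inG /gintegral /integral_t /integral_r /phalf_t /phalf_r /= => xy_G.
have [z1 [z2 [e1 e2 z12_even]]] : exists z1 z2 : int,
    [/\ 2 * tpos x = z1%:~R, 2 * y = z2%:~R & (2 %| z1 - z2)%Z].
  case: xy_G => [[/intrP[i ei] /intrP[j ej]] | [[/intrP[i ei] i_half] [/intrP[j ej] j_half]]].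
    by exists (i + i), (j + j); rewrite ei ej !intrD; split; [lra | lra | lia].
  exists i, j; split=> //.
  have [x_half y_half] : tpos x = i%:~R / 2 /\ y = j%:~R / 2 by split; lra.
  by move: i_half j_half; rewrite x_half y_half !intr_half_int; lia.
have z1_ge0 : 0 <= z1 by rewrite -(ler0z R) -e1; have := tpos_ge0 x; lra.
exists (tray x), (divz (z1 - z2) 2), (divz (z1 + z2) 2); rewrite /grid_pt.
have [-> ->] : divz (z1 - z2) 2 + divz (z1 + z2) 2 = z1 /\
               divz (z1 + z2) 2 - divz (z1 - z2) 2 = z2 by lia.
split=> //; congr pair; last lra.
by rewrite -{1}(tpointK x); congr tpoint; lra.
Qed.

Lemma gintegral_grid_pt r a b : 0 <= a + b -> gintegral (grid_pt r a b) <-> (2 %| a + b)%Z.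
Proof.
move=> ab_ge0; rewrite /gintegral /integral_t /integral_r /= tpos_tpoint ?intr_half_ge0 //.
by rewrite !intr_half_int; split => [[]|]; lia.
Qed.

Lemma geven_grid_pt r a b : 0 <= a + b ->
  geven (grid_pt r a b) <-> (2 %| a)%Z /\ (2 %| b)%Z.
Proof.
move=> ab_ge0; rewrite /geven gintegral_grid_pt // /= tpos_tpoint ?intr_half_ge0 //.
have -> : (a + b)%:~R / 2 - (b - a)%:~R / 2 = a%:~R :> R by rewrite intrD intrB; field.
split => [[ab_even [m am]] | [a_even b_even]].
  have : a = m + m by apply: (@intr_inj R); rewrite intrD; lra.
  by lia.
split; first by lia.
have [m ->] : exists m, a = m + m by exists (divz a 2); lia.
by exists m; rewrite intrD; lra.
Qed.

Lemma godd_grid_pt r a b : 0 <= a + b ->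
  godd (grid_pt r a b) <-> ~~ (2 %| a)%Z /\ ~~ (2 %| b)%Z.
Proof.
move=> ab_ge0; rewrite /godd gintegral_grid_pt // geven_grid_pt //.
by split => [[]|]; lia.
Qed.

Lemma gnorm_grid_pt r r' a b a' b' : 0 <= a + b -> 0 <= a' + b' ->
  gnorm (grid_pt r a b) (grid_pt r' a' b') =
  ((if r == r' then `|a + b - (a' + b')| else a + b + (a' + b'))
   + `|b - a - (b' - a')|)%:~R / 2.
Proof.
move=> ab_ge0 ab_ge0'; rewrite /gnorm /= tdist_tpoint ?intr_half_ge0 //.
by case: ifP => _; rewrite !(intrD, intr_norm, intrB); case_norms; lra.
Qed.

Lemma gmid_grid_pt r a b a' b' : 0 <= a + b -> 0 <= a' + b' ->
  gmid (grid_pt r a b) (grid_pt r a' b') = halfgrid_pt r (a + a') (b + b').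
Proof.
move=> ab_ge0 ab_ge0'; rewrite /gmid /= tmid_tpoint ?intr_half_ge0 //.
by congr (tpoint _ _, _); rewrite !(intrD, intrB); lra.
Qed.

Lemma gmid_grid_pt_halfgrid r r' a b a' b' : 0 <= a + b -> 0 <= a' + b' ->
  exists r'' (A B : int),
    0 <= A + B /\ gmid (grid_pt r a b) (grid_pt r' a' b') = halfgrid_pt r'' A B.
Proof.
move=> ab_ge0 ab_ge0'; case: (r =P r') => [<- | r_neq].
  by exists r, (a + a'), (b + b'); rewrite gmid_grid_pt //; split; first lia.
rewrite /gmid /= tmid_tpointE ?intr_half_ge0 // /star_mid; move/eqP/negPf: r_neq => ->.
case: lerP => le.
- exists r, (a - b'), (b - a'); split.
    have : ((a' + b')%:~R : R) <= (a + b)%:~R by lra.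
    by rewrite ler_int; lia.
  by congr (tpoint _ _, _); rewrite !(intrD, intrB); lra.
- exists r', (a' - b), (b' - a); split.
    have : ((a + b)%:~R : R) <= (a' + b')%:~R by lra.
    by rewrite ler_int; lia.
  by congr (tpoint _ _, _); rewrite !(intrD, intrB); lra.
Qed.

Lemma gadj_grid_pt r a b a' b' : 0 <= a + b -> 0 <= a' + b' ->
  `|a' - a| + `|b' - b| = 1 -> gadj (grid_pt r a b) (grid_pt r a' b').
Proof.
move=> ab_ge0 ab_ge0' step; rewrite /gadj !gintegral_grid_pt // gnorm_grid_pt // eqxx.
rewrite (_ : _ + _ = 2); last by lia.
do 2 (split; first exact: grid_pt_inG).
split; first lra.
by case: (boolP (2 %| a + b)%Z) => ab_even; [left | right]; lia.
Qed.

Lemma gadj_sym p q : gadj p q -> gadj q p.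
Proof. by case=> ip [iq [one h]]; do 2 split=> //; split; [rewrite gnormC | tauto]. Qed.

Lemma geven_gintegral p : geven p -> gintegral p.
Proof. by case. Qed.

Lemma gprec_cases p q : gprec p q ->
  gnorm p q = 1 /\ (geven p /\ ~ gintegral q \/ ~ gintegral p /\ godd q).
Proof.
case=> -[_ [_ [pq one]]] [ev | od]; split=> //; [left | right].
  by have := geven_gintegral ev; tauto.
by have [iq _] := od; tauto.
Qed.

Lemma gprec_gprec p w q : gprec p w -> gprec w q -> geven p /\ godd q.
Proof.
move=> /gprec_cases[_ pw] /gprec_cases[_ wq].
case: pw => [[ev nw] | [_ [iw nev]]]; case: wq => [[ev_w _] | [nw' od]] //.
by case: nw; apply: geven_gintegral.
Qed.

Lemma gprec_chain3 p w w' q : gprec p w -> gprec w w' -> gprec w' q -> False.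
Proof.
move=> pw ww' /gprec_cases[_ [[ev' _] | [nw' _]]];
  by have [_ [iw' nev']] := gprec_gprec pw ww'.
Qed.

Lemma gle_cases p q : gle p q -> p = q \/ gprec p q \/ exists2 w, gprec p w & gprec w q.
Proof.
move=> pq; elim: (clos_rt_rt1n _ _ _ _ pq) => [|x y z xy _ [<- | [yz | [w yw wz]]]].
- by left.
- by right; left.
- by right; right; exists y.
- by case: (gprec_chain3 xy yw wz).
Qed.

Lemma gnorm_geven_godd p q : inG p -> inG q -> geven p -> godd q -> gnorm p q <> 2.
Proof.
move=> /inG_grid_pt[r [a [b [ab_ge0 ->]]]] /inG_grid_pt[r' [a' [b' [ab_ge0' ->]]]].
rewrite geven_grid_pt // godd_grid_pt // gnorm_grid_pt // => -[a_even b_even] [a'_odd b'_odd].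
move=> two; have : (if r == r' then `|a + b - (a' + b')| else a + b + (a' + b'))
    + `|b - a - (b' - a')| = 4 by apply: (@intr_inj R); lra.
by case: ifP => _; lia.
Qed.

Lemma gle_gnorm_lt2 p q : gle p q -> gnorm p q < 2.
Proof.
case/gle_cases => [<- | [/gprec_cases[-> _] | [w pw wq]]]; first by rewrite gnormxx; lra.
  by lra.
have [ev od] := gprec_gprec pw wq.
have [[[ip _] _] [[_ [iq _]] _]] := (pw, wq).
have := gnorm_triangle p w q; have [-> _] := gprec_cases pw; have [-> _] := gprec_cases wq.
by have := gnorm_geven_godd ip iq ev od; rewrite lt_neqAle => /eqP -> /=; lra.
Qed.

Lemma gadj_comparable p q : gadj p q -> gle p q \/ gle q p.
Proof.
move=> pq; have qp := gadj_sym pq.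
case: (pq) => _ [_ [_ [[ip _] | [_ iq]]]].
  case: (classic (geven p)) => ev; [left | right]; apply: rt_step; split=> //; first by left.
  by right; split.
case: (classic (geven q)) => ev; [right | left]; apply: rt_step; split=> //; first by left.
by right; split.
Qed.

Lemma gadj_gadj_comparable p w q : gadj p w -> gadj w q ->
  geven p /\ godd q \/ godd p /\ geven q -> gle p q \/ gle q p.
Proof.
move=> pw wq [[ev od] | [od ev]]; [left | right]; apply: (rt_trans _ _ _ w).
- by apply: rt_step; split=> //; left.
- by apply: rt_step; split=> //; right.
- by apply: rt_step; split; [apply: gadj_sym | left].
- by apply: rt_step; split; [apply: gadj_sym | right].
Qed.

(* By the parities of A and B the point is a lattice point, the midpoint of a lattice
   edge, or the centre of a unit square; in the last case take the diagonal of the square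
   that joins an even and an odd corner. *)
Lemma halfgrid_comparable_pair r (A B : int) : 0 <= A + B ->
  exists u v, [/\ inG u, inG v, gle u v \/ gle v u & gmid u v = halfgrid_pt r A B].
Proof.
move=> AB_ge0.
have mid a b a' b' : 0 <= a + b -> 0 <= a' + b' -> a + a' = A -> b + b' = B ->
    gmid (grid_pt r a b) (grid_pt r a' b') = halfgrid_pt r A B.
  by move=> ab_ge0 ab_ge0' <- <-; apply: gmid_grid_pt.
have [a eA] : exists a, A = a + a \/ A = a + a + 1 by exists (divz A 2); lia.
have [b eB] : exists b, B = b + b \/ B = b + b + 1 by exists (divz B 2); lia.
case: eA eB => eA [] eB.
- exists (grid_pt r a b), (grid_pt r a b).
  by split; try (left; apply: rt_refl); try apply: mid; try apply: grid_pt_inG; lia.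
- exists (grid_pt r a b), (grid_pt r a (b + 1)).
  split; try apply: gadj_comparable; try apply: gadj_grid_pt; try apply: mid;
    try apply: grid_pt_inG; lia.
- exists (grid_pt r a b), (grid_pt r (a + 1) b).
  split; try apply: gadj_comparable; try apply: gadj_grid_pt; try apply: mid;
    try apply: grid_pt_inG; lia.
- case: (boolP (2 %| a - b)%Z) => ab_even.
    exists (grid_pt r a b), (grid_pt r (a + 1) (b + 1)).
    split; try apply: mid; try apply: grid_pt_inG; try lia.
    apply: (gadj_gadj_comparable (w := grid_pt r (a + 1) b)); try apply: gadj_grid_pt; try lia.
    by rewrite !geven_grid_pt ?godd_grid_pt; lia.
  exists (grid_pt r a (b + 1)), (grid_pt r (a + 1) b).
  split; try apply: mid; try apply: grid_pt_inG; try lia.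
  apply: (gadj_gadj_comparable (w := grid_pt r (a + 1) (b + 1)));
    try apply: gadj_grid_pt; try lia.
  by rewrite !geven_grid_pt ?godd_grid_pt; lia.
Qed.

Lemma gpair_spec_exists p q : inG p -> inG q -> exists uv, gpair_spec p q uv.
Proof.
move=> /inG_grid_pt[r [a [b [ab_ge0 ->]]]] /inG_grid_pt[r' [a' [b' [ab_ge0' ->]]]].
have [r'' [A [B [AB_ge0 mid]]]] := gmid_grid_pt_halfgrid r r' ab_ge0 ab_ge0'.
have [u [v [iu iv [uv | vu] uv_mid]]] := halfgrid_comparable_pair r'' AB_ge0.
  by exists (u, v); rewrite /gpair_spec mid uv_mid.
by exists (v, u); rewrite /gpair_spec gmidC mid uv_mid.
Qed.

Lemma gfloor_gceil_spec p q : inG p -> inG q -> gpair_spec p q (gfloor p q, gceil p q).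
Proof.
move=> ip iq; rewrite /gfloor /gceil -surjective_pairing.
exact: epsilon_spec (gpair_spec_exists ip iq).
Qed.

Lemma gpair_spec_near_gmid p q u v : gpair_spec p q (u, v) ->
  gnorm (gmid p q) u < 1 /\ gnorm (gmid p q) v < 1.
Proof.
case=> /= _ [_ [uv <-]]; have [mu mv] := gnorm_gmid u v.
by rewrite gnormC mu mv; have := gle_gnorm_lt2 uv; split; lra.
Qed.

Lemma near_gmid_gnorm p q w : gnorm (gmid p q) w < 1 ->
  [/\ gnorm p q / 2 - 1 < gnorm p w, gnorm p w < gnorm p q / 2 + 1 &
      gnorm p q / 2 - 1 < gnorm w q].
Proof.
move=> near; have [pm mq] := gnorm_gmid p q; have := gnorm_triangle p (gmid p q) w.
have := gnorm_triangle p w (gmid p q); have := gnorm_triangle (gmid p q) w q.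
by rewrite pm mq (gnormC w (gmid p q)); split; lra.
Qed.

Lemma gnormv_attained n (p q : 'I_n -> Gpt R k) :
  0 < gnormv p q -> exists i, gnormv p q = gnorm (p i) (q i).
Proof.
case: n p q => [|n] p q; first by rewrite /gnormv big_ord0 ltxx.
move=> _; rewrite /gnormv.
have [i _ ->] := @eq_bigmax _ _ _ 0 ord0 xpredT _ isT (fun i _ => gnorm_ge0 (p i) (q i)).
by exists i.
Qed.

Lemma gnormv_lt_near_gmid n (p q w : 'I_n -> Gpt R k) :
  2 <= gnormv p q -> (forall i, gnorm (gmid (p i) (q i)) (w i) < 1) ->
  (w <> p /\ w <> q) /\ gnormv p w < gnormv p q.
Proof.
move=> D_ge2 near; have [i0 Di0] : exists i, gnormv p q = gnorm (p i) (q i).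
  by apply: gnormv_attained; lra.
split.
  have [lo _ lo'] := near_gmid_gnorm (near i0).
  by split=> wE; rewrite wE gnormxx -Di0 in lo lo'; lra.
apply: bigmax_lt => [|i _]; first lra.
have [_ hi _] := near_gmid_gnorm (near i).
have : gnorm (p i) (q i) <= gnormv p q by apply: le_bigmax.
lra.
Qed.

End Grid.

Theorem lemma4p4 (R : realType) (k n : nat) (hk : (1 <= k)%N)
    (p q : 'I_n -> Gpt R k)
    (hp : forall i, inG (p i)) (hq : forall i, inG (q i))
    (hpq : 2 <= gnormv p q) :
  (gceilv p q <> p /\ gceilv p q <> q) /\
  (gfloorv p q <> p /\ gfloorv p q <> q) /\
  (gnormv p (gceilv p q) < gnormv p q /\ gnormv p (gfloorv p q) < gnormv p q).
Proof.
have near i := gpair_spec_near_gmid (gfloor_gceil_spec (hp i) (hq i)).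
have [ceil_neq ceil_lt] := gnormv_lt_near_gmid (w := gceilv p q) hpq (fun i => (near i).2).
have [floor_neq floor_lt] := gnormv_lt_near_gmid (w := gfloorv p q) hpq (fun i => (near i).1).
by [].
Qed.
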